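(* Let $q,r\ge 0$, let $f:\mathbb{R}\to\mathbb{R}$ be $(q,r)$-continuous at every point of $\mathbb{R}$, and let $C\subseteq\mathbb{R}$ be $q$-connected. Then $f(C)$ is $r$-connected.
   Context: For $A\subseteq\mathbb{R}$ and $c\in\mathbb{R}$, $\mathrm{dist}(c,A)=\mathrm{dist}(A,c)=\inf\{|a-c| : a\in A\}$. For $r\ge0$, a set $C\subseteq\mathbb{R}$ is $r$-disconnected if $C=A\cup B$ for some nonempty sets $A,B$ such that $\mathrm{dist}(a,B)>r$ for every $a\in A$ and $\mathrm{dist}(A,b)>r$ for every $b\in B$; $C$ is $r$-connected if it is not $r$-disconnected. A function $f:\mathbb{R}\to\mathbb{R}$ is $(q,r)$-continuous at $a$ if for every $\varepsilon>0$ there is $\delta>0$ such that $|x-a|<q+\delta$ implies $|f(x)-f(a)|<r+\varepsilon$. *)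

From Stdlib Require Import Reals.
Open Scope R_scope.

Definition dist_set (c : R) (A : R -> Prop) : R -> Prop :=
  fun x => exists a, A a /\ x = Rabs (a - c).

Definition is_dist (c : R) (A : R -> Prop) (d : R) : Prop :=
  (forall x, dist_set c A x -> d <= x) /\
  (forall m, (forall x, dist_set c A x -> m <= x) -> m <= d).

Definition r_disconnected (r : R) (C : R -> Prop) : Prop :=
  exists A B : R -> Prop,
    (exists a, A a) /\ (exists b, B b) /\
    (forall x, C x <-> (A x \/ B x)) /\
    (forall a, A a -> exists d, is_dist a B d /\ d > r) /\
    (forall b, B b -> exists d, is_dist b A d /\ d > r).

Definition r_connected (r : R) (C : R -> Prop) : Prop := ~ r_disconnected r C.

Definition qr_continuous_at (q r : R) (f : R -> R) (a : R) : Prop :=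
  forall eps, eps > 0 -> exists delta, delta > 0 /\
    forall x, Rabs (x - a) < q + delta -> Rabs (f x - f a) < r + eps.

Definition image (f : R -> R) (C : R -> Prop) : R -> Prop :=
  fun y => exists x, C x /\ y = f x.

(* If f(C) = A ∪ B with A and B more than r apart, pull the splitting back to
   C_A = C ∩ f⁻¹(A) and C_B = C ∩ f⁻¹(B).  For a ∈ C_A put ε = dist(f a, B) - r > 0;
   (q,r)-continuity at a gives δ > 0 such that every x within q + δ of a has
   |f x - f a| < dist(f a, B), so f x ∉ B.  Hence dist(a, C_B) ≥ q + δ > q, and
   symmetrically, so C would be q-disconnected. *)

From Stdlib Require Import Reals Lra.
Open Scope R_scope.

Lemma is_dist_le (c : R) (A : R -> Prop) (d a : R) :
  is_dist c A d -> A a -> d <= Rabs (a - c).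
Proof.
  intros [Hlow _] Ha.
  apply Hlow; exists a; split; auto.
Qed.

Lemma is_dist_exists_ge (c : R) (A : R -> Prop) (L : R) :
  (exists a, A a) -> (forall a, A a -> L <= Rabs (a - c)) ->
  exists d, is_dist c A d /\ L <= d.
Proof.
  intros [a Ha] HL.
  set (E := fun m => forall x, dist_set c A x -> m <= x).
  assert (HE : bound E).
  { exists (Rabs (a - c)); intros m Hm; apply Hm; exists a; split; auto. }
  assert (HLE : E L) by (intros x [a' [Ha' ->]]; auto).
  destruct (completeness E HE (ex_intro _ L HLE)) as [d [Hub Hlub]].
  exists d; split; [split|].
  - intros x Hx; apply Hlub; intros m Hm; auto.
  - intros m Hm; apply Hub; exact Hm.
  - apply Hub; exact HLE.
Qed.

Lemma dist_preimage_gt (q r : R) (f : R -> R) (B P : R -> Prop) (a d : R) :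
  qr_continuous_at q r f a ->
  is_dist (f a) B d -> d > r ->
  (forall x, P x -> B (f x)) -> (exists x, P x) ->
  exists d', is_dist a P d' /\ d' > q.
Proof.
  intros Hfa Hd Hdr HPB HP.
  destruct (Hfa (d - r)) as [delta [Hdelta Hnear]]; [lra|].
  destruct (is_dist_exists_ge a P (q + delta) HP) as [d' [Hd' Hge]].
  - intros x HPx.
    destruct (Rlt_or_le (Rabs (x - a)) (q + delta)) as [Hlt|Hle]; [|exact Hle].
    exfalso.
    pose proof (Hnear x Hlt).
    pose proof (is_dist_le _ _ _ _ Hd (HPB x HPx)).
    lra.
  - exists d'; split; [exact Hd'|lra].
Qed.

Section Preimage.

Variables (f : R -> R) (C A B : R -> Prop).
Hypothesis hsplit : forall y, image f C y <-> A y \/ B y.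

Lemma preimage_nonempty : (exists y, A y) -> exists x, C x /\ A (f x).
Proof.
  intros [y Hy].
  destruct (proj2 (hsplit y) (or_introl Hy)) as [x [Hx ->]].
  exists x; split; auto.
Qed.

Lemma preimage_split (x : R) : C x <-> (C x /\ A (f x)) \/ (C x /\ B (f x)).
Proof.
  split.
  - intros Hx.
    destruct (proj1 (hsplit (f x)) (ex_intro _ x (conj Hx eq_refl))); auto.
  - intros [[Hx _]|[Hx _]]; exact Hx.
Qed.

End Preimage.

Theorem theorem6 (q r : R) (f : R -> R) (C : R -> Prop)
  (hq : 0 <= q) (hr : 0 <= r)
  (hf : forall a, qr_continuous_at q r f a)
  (hC : r_connected q C) :
  r_connected r (image f C).
Proof.
  intros [A [B [HA [HB [Hsplit [HAB HBA]]]]]].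
  assert (HBsplit : forall y, image f C y <-> B y \/ A y)
    by (intros y; rewrite Hsplit; tauto).
  pose proof (preimage_nonempty f C A B Hsplit HA) as HCA.
  pose proof (preimage_nonempty f C B A HBsplit HB) as HCB.
  apply hC.
  exists (fun x => C x /\ A (f x)), (fun x => C x /\ B (f x)).
  split; [exact HCA|]. split; [exact HCB|].
  split; [exact (preimage_split f C A B Hsplit)|]. split.
  - intros a [_ Ha]; destruct (HAB _ Ha) as [d [Hd Hdr]].
    apply (dist_preimage_gt q r f B _ a d (hf a) Hd Hdr); [tauto | exact HCB].
  - intros b [_ Hb]; destruct (HBA _ Hb) as [d [Hd Hdr]].
    apply (dist_preimage_gt q r f A _ b d (hf b) Hd Hdr); [tauto | exact HCA].
Qed.
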